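(* Let $k$ be an even integer, let $f=\sum_{n\ge 1}a(n)q^n\in S_k$ be a normalized Hecke eigenform of level $1$, and let $\nu$ be a nonnegative integer. Then $$\frac{(k+2\nu-1)!}{(k+\nu-1)!}\,\mathcal{S}_1\big([\theta(\tau),f(4\tau)]_{\nu}\big)=[f(\tau),f(\tau)]_{2\nu},$$ where the first bracket is taken with $\theta$ of weight $\tfrac12$ and $f(4\tau)$ of weight $k$, and the second with both entries of weight $k$.
   Context: $q=e^{2\pi i\tau}$, $\tau\in\mathbb H$, and $S_k$ denotes the space of cusp forms of weight $k$ for $\mathrm{SL}_2(\mathbb Z)$. $\theta(\tau)=\sum_{n\in\mathbb Z}q^{n^2}$ is Jacobi's theta function. For holomorphic functions $f_1,f_2$ on $\mathbb H$ regarded as having weights $k_1,k_2$, and $\nu\in\mathbb Z_{\ge0}$, the Rankin–Cohen bracket is $$[f_1,f_2]_\nu=(2\pi i)^{-\nu}\sum_{i=0}^{\nu}(-1)^{\nu-i}\binom{\nu}{i}\frac{\Gamma(k_1+\nu)\Gamma(k_2+\nu)}{\Gamma(k_1+i)\Gamma(k_2+\nu-i)}f_1^{(i)}f_2^{(\nu-i)},$$ where $f^{(i)}$ denotes the $i$-th derivative with respect to $\tau$. For an integer $\lambda$, the first Shimura map $\mathcal S_1$ on forms of weight $\lambda+\tfrac12$ is given on $q$-expansions by $\sum_{n\ge1}c(n)q^n\mapsto\sum_{n\ge1}\Big(\sum_{d\mid n}d^{\lambda-1}c(n^2/d^2)\Big)q^n$; here it is applied with $\lambda=k+2\nu$ to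 $[\theta(\tau),f(4\tau)]_\nu$, which has weight $k+2\nu+\tfrac12$. *)

From Stdlib Require Import Reals ZArith List.
From Coquelicot Require Import Coquelicot.

Open Scope C_scope.

(** q-expansions (formal Fourier expansions in q = e^{2 pi i tau}):
    coefficient sequences c : nat -> C, f = sum_{n>=0} c n q^n. *)

(** q^n = e^{2 pi i n tau}, written with real exp/cos/sin. *)
Definition qpow (tau : C) (n : nat) : C :=
  RtoC (exp (- 2 * PI * INR n * Im tau)) *
  (cos (2 * PI * INR n * Re tau), sin (2 * PI * INR n * Re tau)).

(** a : nat -> C is the q-expansion of a cusp form of weight k for SL_2(Z):
    a 0 = 0 (vanishing at the cusp), the q-series converges on the upper
    half plane to a function F (holomorphic and 1-periodic automatically),
    and F(-1/tau) = tau^k F(tau). *)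
Definition is_cusp_form (k : nat) (a : nat -> C) : Prop :=
  a 0%nat = RtoC 0 /\
  exists F : C -> C,
    (forall tau, (0 < Im tau)%R -> is_series (fun n => a n * qpow tau n) (F tau)) /\
    (forall tau, (0 < Im tau)%R -> F (- / tau) = pow_n tau k * F tau).

(** Hecke operator T_n (n >= 1) of weight k on q-expansions:
    (T_n a)(m) = sum_{d | gcd(m,n)} d^(k-1) a(m n / d^2). *)
Definition hecke (k n : nat) (a : nat -> C) (m : nat) : C :=
  sum_n (fun j => let d := S j in
           if andb (Nat.eqb (m mod d) 0) (Nat.eqb (n mod d) 0)
           then pow_n (RtoC (INR d)) (k - 1) * a ((m * n) / (d * d))%nat
           else RtoC 0) (n - 1).

Definition is_hecke_eigenform (k : nat) (a : nat -> C) : Prop :=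
  forall n : nat, (1 <= n)%nat ->
    exists lam : C, forall m : nat, hecke k n a m = lam * a m.

(** Rising factorial x (x+1) ... (x+m-1) = Gamma(x+m)/Gamma(x). *)
Fixpoint rising (x : R) (m : nat) : R :=
  match m with
  | O => 1%R
  | S m' => (rising x m' * (x + INR m'))%R
  end.

(** Rankin-Cohen coefficient
    (-1)^(nu-i) binom(nu,i) Gamma(k1+nu)Gamma(k2+nu)/(Gamma(k1+i)Gamma(k2+nu-i)). *)
Definition rc_weight (k1 k2 : R) (nu i : nat) : R :=
  ((-1) ^ (nu - i) * Binomial.C nu i *
   rising (k1 + INR i) (nu - i) * rising (k2 + INR (nu - i)) i)%R.

(** Rankin-Cohen bracket on q-expansions: (2 pi i)^{-1} d/dtau acts on
    sum c(n) q^n as multiplication of c(n) by n, and products of q-series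
    are Cauchy products. *)
Definition rc_bracket (k1 k2 : R) (nu : nat) (c1 c2 : nat -> C) (n : nat) : C :=
  sum_n (fun i =>
     RtoC (rc_weight k1 k2 nu i) *
     sum_n (fun m => pow_n (RtoC (INR m)) i * c1 m *
                     (pow_n (RtoC (INR (n - m))) (nu - i) * c2 (n - m)%nat)) n) nu.

(** q-expansion of theta(tau) = sum_{m in Z} q^{m^2}:
    coefficient n = #{m in Z : m^2 = n} (such m satisfy |m| <= n). *)
Definition theta_coef (n : nat) : C :=
  RtoC (INR (length (filter (fun m : Z => Z.eqb (m * m) (Z.of_nat n))
                      (map (fun j => (Z.of_nat j - Z.of_nat n)%Z) (seq 0 (2 * n + 1)))))).

Definition dilate4 (a : nat -> C) (n : nat) : C :=
  if Nat.eqb (n mod 4) 0 then a (n / 4)%nat else RtoC 0.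

(** First Shimura map for weight lam + 1/2:
    sum_{n>=1} c(n) q^n |-> sum_{n>=1} (sum_{d|n} d^(lam-1) c(n^2/d^2)) q^n. *)
Definition shimura1 (lam : nat) (c : nat -> C) (n : nat) : C :=
  match n with
  | O => RtoC 0
  | S _ => sum_n (fun j => let d := S j in
             if Nat.eqb (n mod d) 0
             then pow_n (RtoC (INR d)) (lam - 1) * c ((n * n) / (d * d))%nat
             else RtoC 0) (n - 1)
  end.

From Stdlib Require Import Reals ZArith List Lia Lra.
From Coquelicot Require Import Coquelicot.
Open Scope C_scope.

(* The coefficient of [q^(N^2)] in [[theta, f(4 tau)]_nu] only involves the pairs
   [(s^2, 4 m (N - m))] with [s = |N - 2 m|], so it is [sum_m G(m, N - m) a(m (N - m))] for a
   homogeneous polynomial [G] of degree [2 nu]; a Vandermonde convolution shows that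
   [(k + 2 nu - 1)! / (k + nu - 1)! * G] is the polynomial [Q] carrying the weights of
   [[f, f]_(2 nu)], whose [n]-th coefficient is [sum_m Q(m, n - m) a(m) a(n - m)].  Expanding
   [a(m) a(n - m)] by Hecke multiplicativity, the divisors [d | (m, n)] are exactly those of the
   Shimura map, and [d^(2 nu)] is absorbed by the homogeneity of [Q].

   At [k = 0] the exponent [k - 1] of the Hecke operators is truncated to [0] and the identity
   would fail, but there is no such form: a cusp form of weight 0 is [SL_2(Z)]-invariant, hence
   bounded on the upper half plane by its values on [Im tau >= 1/2], and discrete Fourier
   averaging then bounds its coefficients too well for [a(0) = 0] and [a(1) = 1] to hold. *)

Section FiniteSums.

Fixpoint csum (n : nat) (f : nat -> C) : C :=
  match n with O => 0 | S n' => csum n' f + f n' end.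

Lemma sum_n_csum (f : nat -> C) n : sum_n f n = csum (S n) f.
Proof.
  induction n as [|n IH].
  - rewrite sum_O. simpl. ring.
  - rewrite sum_Sn, IH. reflexivity.
Qed.

Lemma csum_ext n (f g : nat -> C) :
  (forall i, (i < n)%nat -> f i = g i) -> csum n f = csum n g.
Proof.
  induction n as [|n IH]; intros H; simpl; auto.
  rewrite IH by (intros; apply H; lia). rewrite H by lia. reflexivity.
Qed.

Lemma csum_add n (f g : nat -> C) : csum n (fun i => f i + g i) = csum n f + csum n g.
Proof. induction n as [|n IH]; simpl; [ring | rewrite IH; ring]. Qed.

Lemma csum_mult_l n (c : C) (f : nat -> C) : csum n (fun i => c * f i) = c * csum n f.
Proof. induction n as [|n IH]; simpl; [ring | rewrite IH; ring]. Qed.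

Lemma csum_mult_r n (f : nat -> C) (c : C) : csum n (fun i => f i * c) = csum n f * c.
Proof. induction n as [|n IH]; simpl; [ring | rewrite IH; ring]. Qed.

Lemma csum_eq0 n (f : nat -> C) : (forall i, (i < n)%nat -> f i = 0) -> csum n f = 0.
Proof.
  induction n as [|n IH]; intros H; simpl; auto.
  rewrite IH by (intros; apply H; lia). rewrite H by lia. ring.
Qed.

Lemma csum_const n (c : C) : csum n (fun _ => c) = RtoC (INR n) * c.
Proof. induction n as [|n IH]; simpl csum; [simpl; ring | rewrite IH, S_INR, RtoC_plus; ring]. Qed.

Lemma csum_cat n m (f : nat -> C) :
  csum (n + m) f = csum n f + csum m (fun i => f (n + i)%nat).
Proof.
  induction m as [|m IH]; simpl.
  - rewrite Nat.add_0_r. ring.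
  - rewrite Nat.add_succ_r. simpl. rewrite IH. ring.
Qed.

Lemma csum_first n (f : nat -> C) : csum (S n) f = f O + csum n (fun i => f (S i)).
Proof. rewrite <- (Nat.add_1_l n) at 1. rewrite csum_cat. simpl. ring. Qed.

Lemma csum_swap n m (f : nat -> nat -> C) :
  csum n (fun i => csum m (fun j => f i j)) = csum m (fun j => csum n (fun i => f i j)).
Proof.
  induction n as [|n IH]; simpl.
  - rewrite csum_eq0; auto.
  - rewrite IH, <- csum_add. reflexivity.
Qed.

Lemma csum_rev n (f : nat -> C) : csum n f = csum n (fun i => f (n - 1 - i)%nat).
Proof.
  induction n as [|n IH]; auto.
  change (csum (S n) f) with (csum n f + f n). rewrite IH, csum_first, Cplus_comm.
  f_equal; [f_equal; lia | apply csum_ext; intros; f_equal; lia].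
Qed.

Lemma csum_restrict n m (f : nat -> C) : (m <= n)%nat ->
  csum n (fun i => if Nat.ltb i m then f i else 0) = csum m f.
Proof.
  intros H. replace n with (m + (n - m))%nat by lia. rewrite csum_cat, (csum_eq0 (n - m)).
  - rewrite Cplus_0_r. apply csum_ext. intros i Hi.
    destruct (Nat.ltb_spec i m); [reflexivity | lia].
  - intros i _. destruct (Nat.ltb_spec (m + i) m); [lia | reflexivity].
Qed.

Lemma csum_shift o n J (f : nat -> C) : (o + n <= J)%nat ->
  csum n f =
  csum J (fun j => if andb (Nat.leb o j) (Nat.ltb j (o + n)) then f (j - o)%nat else 0).
Proof.
  intros H. replace J with (o + (n + (J - o - n)))%nat by lia. rewrite !csum_cat.
  rewrite (csum_eq0 o), (csum_eq0 (J - o - n)).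
  - rewrite Cplus_0_l, Cplus_0_r. apply csum_ext. intros i Hi.
    destruct (Nat.leb_spec o (o + i)), (Nat.ltb_spec (o + i) (o + n)); try lia.
    simpl. f_equal. lia.
  - intros i _. destruct (Nat.ltb_spec (o + (n + i)) (o + n)); [lia|].
    rewrite Bool.andb_false_r. reflexivity.
  - intros i Hi. destruct (Nat.leb_spec o i); [lia | reflexivity].
Qed.

Lemma csum_telescope N (g : nat -> C) : csum N (fun j => g (S j) - g j) = g N - g O.
Proof. induction N as [|N IH]; simpl csum; [simpl; ring | rewrite IH; ring]. Qed.

Lemma csum_norm_le N (f : nat -> C) (K : R) :
  (forall j, (j < N)%nat -> Cmod (f j) <= K)%R -> (Cmod (csum N f) <= INR N * K)%R.
Proof.
  induction N as [|N IH]; intros H; simpl csum.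
  - rewrite Cmod_0. simpl. lra.
  - eapply Rle_trans; [apply Cmod_triangle|]. rewrite S_INR.
    pose proof (IH ltac:(intros; apply H; lia)). pose proof (H N ltac:(lia)). lra.
Qed.

Lemma RtoC_sum_f_R0 (f : nat -> R) n :
  RtoC (sum_f_R0 f n) = csum (S n) (fun i => RtoC (f i)).
Proof.
  induction n as [|n IH]; simpl; [ring | rewrite RtoC_plus, IH; reflexivity].
Qed.

Lemma pow_n_RtoC (x : R) n : pow_n (RtoC x) n = RtoC (x ^ n).
Proof. induction n as [|n IH]; [reflexivity | simpl; rewrite IH, RtoC_mult; reflexivity]. Qed.

End FiniteSums.

Section Binomials.

(* [Binomial.C n k] is junk for [k > n] (truncated [n - k]); [binom] is [0] there. *)
Definition binom (n k : nat) : R := if Nat.leb k n then Binomial.C n k else 0%R.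

Lemma binom_0 n : binom n 0 = 1%R.
Proof. unfold binom, Binomial.C. simpl. rewrite Nat.sub_0_r. field. apply INR_fact_neq_0. Qed.

Lemma binom_pascal n c : binom (S n) (S c) = (binom n c + binom n (S c))%R.
Proof.
  unfold binom. destruct (Nat.ltb_spec c n) as [Hc|Hc].
  - destruct (Nat.leb_spec (S c) (S n)), (Nat.leb_spec c n), (Nat.leb_spec (S c) n); try lia.
    symmetry. apply pascal. exact Hc.
  - destruct (Nat.eq_dec c n) as [->|Hne].
    + destruct (Nat.leb_spec (S n) (S n)), (Nat.leb_spec n n), (Nat.leb_spec (S n) n); try lia.
      unfold Binomial.C. rewrite !Nat.sub_diag. simpl (INR (fact 0)).
      field. split; apply INR_fact_neq_0.
    + destruct (Nat.leb_spec (S c) (S n)), (Nat.leb_spec c n), (Nat.leb_spec (S c) n); try lia.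
      ring.
Qed.

Lemma vandermonde a b c :
  csum (S c) (fun s => RtoC (binom a s * binom b (c - s))) = RtoC (binom (a + b) c).
Proof.
  revert c. induction a as [|a IH]; intros c.
  - rewrite csum_first, csum_eq0, binom_0, Nat.sub_0_r, Cplus_0_r.
    + f_equal. simpl. ring.
    + intros i _. unfold binom. simpl. f_equal. ring.
  - destruct c as [|c].
    + simpl. rewrite !binom_0, Cplus_0_l. f_equal. ring.
    + rewrite csum_first, (csum_ext _ _ (fun s =>
        RtoC (binom a s * binom b (c - s)) + RtoC (binom a (S s) * binom b (S c - S s)))).
      2:{ intros i _. rewrite binom_pascal, <- RtoC_plus. f_equal. simpl (S c - S i)%nat. ring. }
      rewrite csum_add, IH. replace (S a + b)%nat with (S (a + b)) by lia.
      rewrite binom_pascal, RtoC_plus, <- (IH (S c)), (csum_first (S c)), !binom_0.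
      rewrite Nat.sub_0_r. ring.
Qed.

End Binomials.

Section RankinCohenWeights.

Lemma rising_INR c b : (1 <= c)%nat ->
  rising (INR c) b = (INR (fact (c + b - 1)) / INR (fact (c - 1)))%R.
Proof.
  intros Hc. induction b as [|b IH]; simpl rising.
  - rewrite Nat.add_0_r. field. apply INR_fact_neq_0.
  - rewrite IH. replace (c + S b - 1)%nat with (S (c + b - 1)) by lia.
    rewrite fact_simpl, mult_INR. replace (S (c + b - 1)) with (c + b)%nat by lia.
    rewrite plus_INR. field. apply INR_fact_neq_0.
Qed.

(* Legendre's duplication formula, for the rising factorial at a half-integer. *)
Lemma rising_half_INR i s :
  (rising (1/2 + INR i) s * 4 ^ s * INR (fact (2 * i)) * INR (fact (i + s))
   = INR (fact (2 * (i + s))) * INR (fact i))%R.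
Proof.
  induction s as [|s IH].
  - rewrite !Nat.add_0_r. simpl. ring.
  - replace (2 * (i + S s))%nat with (S (S (2 * (i + s)))) by lia.
    replace (i + S s)%nat with (S (i + s)) by lia.
    rewrite !fact_simpl, !mult_INR. simpl rising. simpl pow.
    transitivity (rising (1 / 2 + INR i) s * 4 ^ s * INR (fact (2 * i)) * INR (fact (i + s))
                  * (2 * (2 * (INR i + INR s) + 1) * (INR i + INR s + 1)))%R.
    + rewrite !S_INR, ?mult_INR, ?plus_INR. simpl (INR 2). field.
    + rewrite IH, !S_INR, ?mult_INR, ?plus_INR. simpl (INR 2). ring.
Qed.

Definition shimura_const (k nu : nat) : R :=
  (INR (fact (k + 2 * nu - 1)) / INR (fact (k + nu - 1)))%R.

Definition theta_weight (k nu i : nat) : R := rc_weight (1/2) (INR k) nu i.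

Definition bracket_weight (k nu j : nat) : R := rc_weight (INR k) (INR k) (2 * nu) j.

Ltac fact_neq_0 := repeat split; try apply INR_fact_neq_0.

Lemma theta_weight_fact k nu s : (1 <= k)%nat -> (s <= nu)%nat ->
  (theta_weight k nu (nu - s) * 4 ^ s
   = (-1) ^ s * INR (fact (2 * nu)) / (INR (fact s) * INR (fact (2 * nu - 2 * s)))
     * INR (fact (k + nu - 1)) / INR (fact (k + s - 1)))%R.
Proof.
  intros Hk Hs. unfold theta_weight, rc_weight, Binomial.C.
  replace (nu - (nu - s))%nat with s by lia.
  rewrite <- plus_INR, rising_INR by lia.
  replace (k + s + (nu - s) - 1)%nat with (k + nu - 1)%nat by lia.
  pose proof (rising_half_INR (nu - s) s) as Hhalf.
  replace (nu - s + s)%nat with nu in Hhalf by lia.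
  replace (2 * (nu - s))%nat with (2 * nu - 2 * s)%nat in Hhalf by lia.
  assert (Hr : (rising (1 / 2 + INR (nu - s)) s * 4 ^ s = INR (fact (2 * nu))
     * INR (fact (nu - s)) / (INR (fact (2 * nu - 2 * s)) * INR (fact nu)))%R).
  { rewrite <- Hhalf. field. fact_neq_0. }
  transitivity ((-1) ^ s * (INR (fact nu) / (INR (fact (nu - s)) * INR (fact s)))
    * (rising (1 / 2 + INR (nu - s)) s * 4 ^ s)
    * (INR (fact (k + nu - 1)) / INR (fact (k + s - 1))))%R; [ring|].
  rewrite Hr. field. fact_neq_0.
Qed.

Definition bracket_weight_red (k nu j : nat) : R :=
  ((-1) ^ (2 * nu - j) * INR (fact (2 * nu)) * INR (fact (k + 2 * nu - 1))
   / (INR (fact j) * INR (fact (k + 2 * nu - j - 1))))%R.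

Lemma bracket_weight_red_binom k nu j : (1 <= k)%nat -> (j <= 2 * nu)%nat ->
  (bracket_weight_red k nu j * binom (k + 2 * nu - 1) (2 * nu - j) = bracket_weight k nu j)%R.
Proof.
  intros Hk Hj. unfold bracket_weight_red, bracket_weight, rc_weight, binom, Binomial.C.
  destruct (Nat.leb_spec (2 * nu - j) (k + 2 * nu - 1)); [|lia].
  rewrite <- !plus_INR, !rising_INR by lia.
  replace (k + j + (2 * nu - j) - 1)%nat with (k + 2 * nu - 1)%nat by lia.
  replace (k + (2 * nu - j) + j - 1)%nat with (k + 2 * nu - 1)%nat by lia.
  replace (k + 2 * nu - 1 - (2 * nu - j))%nat with (k + j - 1)%nat by lia.
  replace (k + (2 * nu - j) - 1)%nat with (k + 2 * nu - j - 1)%nat by lia.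
  field. fact_neq_0.
Qed.

Lemma theta_weight_binom k nu j s :
  (1 <= k)%nat -> (s <= j)%nat -> (s <= 2 * nu - j)%nat -> (j <= 2 * nu)%nat ->
  (shimura_const k nu
     * (theta_weight k nu (nu - s) * 4 ^ s * binom (2 * nu - 2 * s) (j - s)
        * (-1) ^ (2 * nu - s - j))
   = bracket_weight_red k nu j * (binom j s * binom (k + 2 * nu - j - 1) (2 * nu - j - s)))%R.
Proof.
  intros Hk Hsj Hsc Hj.
  rewrite <- !Rmult_assoc, (Rmult_assoc _ (theta_weight _ _ _)), theta_weight_fact by lia.
  unfold binom, Binomial.C, shimura_const, bracket_weight_red.
  destruct (Nat.leb_spec (j - s) (2 * nu - 2 * s)), (Nat.leb_spec s j),
    (Nat.leb_spec (2 * nu - j - s) (k + 2 * nu - j - 1)); try lia.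
  replace (2 * nu - 2 * s - (j - s))%nat with (2 * nu - j - s)%nat by lia.
  replace (k + 2 * nu - j - 1 - (2 * nu - j - s))%nat with (k + s - 1)%nat by lia.
  replace (2 * nu - s - j)%nat with (2 * nu - j - s)%nat by lia.
  replace (2 * nu - j)%nat with (s + (2 * nu - j - s))%nat by lia.
  rewrite pow_add. replace (s + (2 * nu - j - s))%nat with (2 * nu - j)%nat by lia.
  field. fact_neq_0.
Qed.

End RankinCohenWeights.

Section WeightPolynomials.

(* Evaluated at [u = m], [v = N - m]: [(u - v)^2 = |N - 2 m|^2] and [4 u v = 4 m (N - m)]. *)
Definition theta_poly (k nu : nat) (u v : R) : C :=
  csum (S nu) (fun i => RtoC (theta_weight k nu i * ((u - v) ^ 2) ^ i * (4 * u * v) ^ (nu - i))).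

Definition bracket_poly (k nu : nat) (u v : R) : C :=
  csum (S (2 * nu)) (fun j => RtoC (bracket_weight k nu j * u ^ j * v ^ (2 * nu - j))).

Lemma bracket_poly_homog k nu (d u v : R) :
  RtoC (d ^ (2 * nu)) * bracket_poly k nu u v = bracket_poly k nu (d * u) (d * v).
Proof.
  unfold bracket_poly. rewrite <- csum_mult_l. apply csum_ext. intros j Hj.
  rewrite <- RtoC_mult. f_equal.
  rewrite !Rpow_mult_distr. replace (2 * nu)%nat with (j + (2 * nu - j))%nat at 1 by lia.
  rewrite pow_add. ring.
Qed.

(* The coefficient of [u^j v^(2 nu - j)] in the [i]-th term of [shimura_const * theta_poly]. *)
Definition theta_poly_coef (k nu i j : nat) : R :=
  if andb (Nat.leb (nu - i) j) (Nat.ltb j (nu - i + S (2 * i))) then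
    (shimura_const k nu * (theta_weight k nu i * 4 ^ (nu - i) * binom (2 * i) (j - (nu - i))
       * (-1) ^ (2 * i - (j - (nu - i)))))%R
  else 0%R.

Lemma theta_poly_term_expand k nu (u v : R) i : (i <= nu)%nat ->
  RtoC (shimura_const k nu)
    * RtoC (theta_weight k nu i * ((u - v) ^ 2) ^ i * (4 * u * v) ^ (nu - i))
  = csum (S (2 * nu)) (fun j => RtoC (theta_poly_coef k nu i j * (u ^ j * v ^ (2 * nu - j)))).
Proof.
  intros Hi.
  replace (((u - v) ^ 2) ^ i)%R with ((u + - v) ^ (2 * i))%R by (rewrite <- pow_mult; reflexivity).
  rewrite binomial, <- RtoC_mult.
  set (S2 := sum_f_R0 _ (2 * i)).
  replace (shimura_const k nu * (theta_weight k nu i * S2 * (4 * u * v) ^ (nu - i)))%R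
    with (shimura_const k nu * theta_weight k nu i * (4 * u * v) ^ (nu - i) * S2)%R by ring.
  unfold S2. rewrite RtoC_mult, RtoC_sum_f_R0, <- csum_mult_l.
  rewrite (csum_shift (nu - i) (S (2 * i)) (S (2 * nu))) by lia.
  apply csum_ext. intros j Hj. unfold theta_poly_coef.
  destruct (Nat.leb_spec (nu - i) j), (Nat.ltb_spec j (nu - i + S (2 * i))); cbv [andb];
    try (rewrite Rmult_0_l; reflexivity).
  set (l := (j - (nu - i))%nat).
  replace (u ^ j)%R with (u ^ l * u ^ (nu - i))%R by (rewrite <- pow_add; f_equal; unfold l; lia).
  replace (v ^ (2 * nu - j))%R with (v ^ (2 * i - l) * v ^ (nu - i))%R
    by (rewrite <- pow_add; f_equal; unfold l; lia).
  replace ((- v) ^ (2 * i - l))%R with ((-1) ^ (2 * i - l) * v ^ (2 * i - l))%R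
    by (rewrite <- Rpow_mult_distr; f_equal; ring).
  replace (Binomial.C (2 * i) l) with (binom (2 * i) l)
    by (unfold binom; destruct (Nat.leb_spec l (2 * i)); [reflexivity | unfold l in *; lia]).
  rewrite <- RtoC_mult, !Rpow_mult_distr. f_equal. ring.
Qed.

(* After [i = nu - s] the coefficient sum is a Vandermonde convolution. *)
Lemma theta_poly_coef_sum k nu j : (1 <= k)%nat -> (j <= 2 * nu)%nat ->
  csum (S nu) (fun i => RtoC (theta_poly_coef k nu i j)) = RtoC (bracket_weight k nu j).
Proof.
  intros Hk Hj.
  set (c := (2 * nu - j)%nat). set (B := (k + 2 * nu - j - 1)%nat).
  set (m := S (Nat.min j c)).
  rewrite csum_rev, (csum_ext _ _ (fun s =>
    if Nat.ltb s m then RtoC (bracket_weight_red k nu j * (binom j s * binom B (c - s))) else 0)).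
  2:{ intros s Hs. replace (S nu - 1 - s)%nat with (nu - s)%nat by lia. unfold theta_poly_coef.
      replace (nu - (nu - s))%nat with s by lia.
      destruct (Nat.leb_spec s j), (Nat.ltb_spec j (s + S (2 * (nu - s)))), (Nat.ltb_spec s m);
        cbv [andb]; try (unfold m, c in *; lia); try reflexivity.
      f_equal. unfold B, c. rewrite <- theta_weight_binom by (unfold m, c in *; lia).
      replace (2 * (nu - s))%nat with (2 * nu - 2 * s)%nat by lia.
      replace (2 * nu - 2 * s - (j - s))%nat with (2 * nu - s - j)%nat by lia. reflexivity. }
  rewrite csum_restrict by (unfold m; lia).
  rewrite <- bracket_weight_red_binom by lia.
  replace (k + 2 * nu - 1)%nat with (j + B)%nat by (unfold B; lia).
  rewrite RtoC_mult, <- vandermonde, <- csum_mult_l, <- (csum_restrict (S c) m) by (unfold m; lia).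
  apply csum_ext. intros s Hs. destruct (Nat.ltb_spec s m).
  - apply RtoC_mult.
  - unfold binom at 1. destruct (Nat.leb_spec s j); [unfold m in *; lia|].
    rewrite Rmult_0_l, <- RtoC_mult. f_equal. ring.
Qed.

Lemma theta_poly_bracket_poly k nu (u v : R) : (1 <= k)%nat ->
  RtoC (shimura_const k nu) * theta_poly k nu u v = bracket_poly k nu u v.
Proof.
  intros Hk. unfold theta_poly. rewrite <- csum_mult_l.
  rewrite (csum_ext _ _ (fun i => csum (S (2 * nu))
             (fun j => RtoC (theta_poly_coef k nu i j) * RtoC (u ^ j * v ^ (2 * nu - j))))).
  2:{ intros i Hi. rewrite theta_poly_term_expand by lia.
      apply csum_ext. intros. apply RtoC_mult. }
  rewrite csum_swap. apply csum_ext. intros j Hj.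
  rewrite csum_mult_r, theta_poly_coef_sum by lia. rewrite <- RtoC_mult. f_equal. ring.
Qed.

End WeightPolynomials.

Section ThetaCoefficients.

Lemma length_filter_seq_two (p : nat -> bool) a b n : a <> b ->
  (forall i, p i = orb (Nat.eqb i a) (Nat.eqb i b)) ->
  length (filter p (seq 0 n)) = ((if Nat.ltb a n then 1 else 0) + (if Nat.ltb b n then 1 else 0))%nat.
Proof.
  intros Hab Hp. induction n as [|n IH].
  - simpl. destruct a, b; reflexivity.
  - rewrite seq_S, filter_app, length_app, IH. simpl. rewrite Hp.
    destruct (Nat.eqb_spec n a), (Nat.eqb_spec n b), (Nat.ltb_spec a n), (Nat.ltb_spec a (S n)),
      (Nat.ltb_spec b n), (Nat.ltb_spec b (S n)); simpl; lia.
Qed.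

Lemma theta_coef_0 : theta_coef 0 = 1.
Proof. reflexivity. Qed.

Lemma theta_coef_nonsquare j : (forall s, (s * s)%nat <> j) -> theta_coef j = 0.
Proof.
  intros Hj. unfold theta_coef.
  rewrite filter_map_swap, length_map, (filter_ext_in _ (fun _ => false)), filter_false;
    [reflexivity|].
  intros i _. apply Z.eqb_neq. intros E. apply (Hj (Z.abs_nat (Z.of_nat i - Z.of_nat j))).
  apply Nat2Z.inj. rewrite Nat2Z.inj_mul, Nat2Z.inj_abs_nat, <- Z.abs_mul, Z.abs_eq by nia.
  exact E.
Qed.

(* The two square roots [-s] and [s] of [s^2] sit at positions [s^2 - s] and [s^2 + s]. *)
Lemma theta_coef_square s : (1 <= s)%nat -> theta_coef (s * s) = 2.
Proof.
  intros Hs. unfold theta_coef.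
  rewrite filter_map_swap, length_map, (length_filter_seq_two _ (s * s - s) (s * s + s)); try nia.
  - destruct (Nat.ltb_spec (s * s - s) (2 * (s * s) + 1)),
      (Nat.ltb_spec (s * s + s) (2 * (s * s) + 1)); try nia.
    simpl. replace (1 + 1)%R with 2%R by ring. reflexivity.
  - intros i.
    destruct (Nat.eqb_spec i (s * s - s)), (Nat.eqb_spec i (s * s + s)); simpl;
      [lia | subst i; apply Z.eqb_eq; rewrite Nat2Z.inj_sub by nia; rewrite Nat2Z.inj_mul; ring
      | subst i; apply Z.eqb_eq; rewrite Nat2Z.inj_add, Nat2Z.inj_mul; ring |].
    apply Z.eqb_neq. intros E. rewrite Nat2Z.inj_mul in E.
    assert (E2 : ((Z.of_nat i - Z.of_nat s * Z.of_nat s - Z.of_nat s)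
                  * (Z.of_nat i - Z.of_nat s * Z.of_nat s + Z.of_nat s) = 0)%Z) by lia.
    apply Z.mul_eq_0 in E2. lia.
Qed.

Lemma csum_squares N (F : nat -> C) : (forall j, (forall s, (s * s)%nat <> j) -> F j = 0) ->
  csum (S (N * N)) F = csum (S N) (fun s => F (s * s)%nat).
Proof.
  intros HF. induction N as [|N IH]; [reflexivity|].
  replace (S (S N * S N)) with (S (N * N) + S (2 * N))%nat by lia.
  rewrite csum_cat, IH. change (csum (S (S N)) (fun s => F (s * s)%nat)) with
    (csum (S N) (fun s => F (s * s)%nat) + F (S N * S N)%nat).
  f_equal. simpl csum. rewrite csum_eq0, Cplus_0_l; [f_equal; lia|].
  intros i Hi. apply HF. intros s Hs. destruct (Nat.le_gt_cases s N); nia.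
Qed.

(* Each [s] of the right parity is [|N - 2 m|] for [m] and [N - m], matching [theta_coef (s^2) = 2]. *)
Lemma theta_parity_sum N (f : nat -> C) :
  (forall s, (s <= N)%nat -> Nat.even s <> Nat.even N -> f s = 0) ->
  csum (S N) (fun s => theta_coef (s * s) * f s)
  = csum (S N) (fun m => f (N - 2 * m + (2 * m - N))%nat).
Proof.
  revert f. induction N as [N IH] using lt_wf_ind. intros f Hf.
  destruct N as [|[|N]].
  - simpl. rewrite theta_coef_0. ring.
  - simpl csum. rewrite theta_coef_0, (theta_coef_square 1 (le_n 1) : theta_coef 1 = 2).
    rewrite (Hf 0%nat) by (lia || discriminate).
    replace (RtoC 2) with (1 + 1) by (rewrite <- RtoC_plus; f_equal; ring). ring.
  - change (csum (S (S (S N))) (fun s => theta_coef (s * s) * f s)) with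
      (csum (S N) (fun s => theta_coef (s * s) * f s) + theta_coef (S N * S N) * f (S N)
        + theta_coef (S (S N) * S (S N)) * f (S (S N))).
    rewrite (IH N), (Hf (S N)), (theta_coef_square (S (S N))); try lia.
    2:{ rewrite Nat.even_succ_succ, Nat.even_succ, <- Nat.negb_even. destruct (Nat.even N); discriminate. }
    2:{ intros s Hs He. apply Hf; [lia | rewrite Nat.even_succ_succ; exact He]. }
    rewrite (csum_first (S (S N))). change (csum (S (S N)) _) with
      (csum (S N) (fun i => f (S (S N) - 2 * S i + (2 * S i - S (S N)))%nat)
       + f (S (S N) - 2 * S (S N) + (2 * S (S N) - S (S N)))%nat).
    rewrite (csum_ext (S N) (fun i => f (S (S N) - 2 * S i + (2 * S i - S (S N)))%nat)
               (fun m => f (N - 2 * m + (2 * m - N))%nat)) by (intros; f_equal; lia).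
    replace (S (S N) - 2 * S (S N) + (2 * S (S N) - S (S N)))%nat with (S (S N)) by lia.
    replace (S (S N) - 2 * 0 + (2 * 0 - S (S N)))%nat with (S (S N)) by lia.
    replace (RtoC 2) with (1 + 1) by (rewrite <- RtoC_plus; f_equal; ring). ring.
Qed.

Lemma square_diff_mod4 N s : (s <= N)%nat -> Nat.even s <> Nat.even N ->
  ((N * N - s * s) mod 4 <> 0)%nat.
Proof.
  intros Hs Hp Hm.
  pose proof (Nat.div_mod (N * N - s * s) 4 ltac:(lia)) as Hd. rewrite Hm in Hd.
  set (q := ((N * N - s * s) / 4)%nat) in *.
  destruct (Nat.Even_or_Odd s) as [[x Hx]|[x Hx]], (Nat.Even_or_Odd N) as [[y Hy]|[y Hy]];
    subst; rewrite ?Nat.even_add, ?Nat.even_mul in Hp; simpl in Hp; try congruence; nia.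
Qed.

Lemma dilate4_mul4 (a : nat -> C) x : dilate4 a (4 * x) = a x.
Proof.
  unfold dilate4. rewrite (Nat.mul_comm 4 x), Nat.Div0.mod_mul, Nat.div_mul by lia.
  reflexivity.
Qed.

Lemma four_mul_prod_squares N m : (m <= N)%nat ->
  (N * N - (N - 2 * m + (2 * m - N)) * (N - 2 * m + (2 * m - N)) = 4 * (m * (N - m)))%nat.
Proof.
  intros Hm. destruct (Nat.le_ge_cases (2 * m) N) as [H|H].
  - destruct (Nat.le_exists_sub (2 * m) N H) as [r [-> _]].
    replace (r + 2 * m - 2 * m + (2 * m - (r + 2 * m)))%nat with r by lia.
    replace (r + 2 * m - m)%nat with (r + m)%nat by lia.
    replace ((r + 2 * m) * (r + 2 * m))%nat with (4 * (m * (r + m)) + r * r)%nat by ring.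
    apply Nat.add_sub.
  - assert (Hwr : exists w r, m = (w + r)%nat /\ N = (2 * w + r)%nat)
      by (exists (N - m)%nat, (2 * m - N)%nat; lia).
    destruct Hwr as [w [r [-> ->]]].
    replace (2 * w + r - 2 * (w + r) + (2 * (w + r) - (2 * w + r)))%nat with r by lia.
    replace (2 * w + r - (w + r))%nat with w by lia.
    replace ((2 * w + r) * (2 * w + r))%nat with (4 * ((w + r) * w) + r * r)%nat by ring.
    apply Nat.add_sub.
Qed.

Lemma theta_bracket_square k nu (a : nat -> C) N :
  rc_bracket (1/2) (INR k) nu theta_coef (dilate4 a) (N * N)
  = csum (S N) (fun m => theta_poly k nu (INR m) (INR (N - m)) * a (m * (N - m))%nat).
Proof.
  set (H := fun j => csum (S nu) (fun i => RtoC (theta_weight k nu i) * (pow_n (RtoC (INR j)) i *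
              (pow_n (RtoC (INR (N * N - j))) (nu - i) * dilate4 a (N * N - j)%nat)))).
  unfold rc_bracket. rewrite sum_n_csum, (csum_ext _ _ (fun i => csum (S (N * N)) (fun j =>
    RtoC (theta_weight k nu i) * (pow_n (RtoC (INR j)) i * theta_coef j
      * (pow_n (RtoC (INR (N * N - j))) (nu - i) * dilate4 a (N * N - j)%nat))))).
  2:{ intros i _. rewrite sum_n_csum, <- csum_mult_l. reflexivity. }
  rewrite csum_swap, (csum_ext _ _ (fun j => theta_coef j * H j)).
  2:{ intros j _. unfold H. rewrite <- csum_mult_l. apply csum_ext. intros; ring. }
  rewrite csum_squares by (intros j Hj; rewrite theta_coef_nonsquare by exact Hj; ring).
  rewrite (theta_parity_sum N (fun s => H (s * s)%nat)).
  2:{ intros s Hs Hp. apply csum_eq0. intros i _. unfold dilate4.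
      destruct (Nat.eqb_spec ((N * N - s * s) mod 4) 0) as [E|_];
        [exfalso; exact (square_diff_mod4 N s Hs Hp E) | ring]. }
  apply csum_ext. intros m Hm. set (t := (N - 2 * m + (2 * m - N))%nat).
  assert (Ht : (N * N - t * t = 4 * (m * (N - m)))%nat) by (apply four_mul_prod_squares; lia).
  assert (Ht2 : (INR (t * t) = (INR m - INR (N - m)) ^ 2)%R).
  { unfold t. destruct (Nat.le_ge_cases (2 * m) N).
    - replace (2 * m - N)%nat with 0%nat by lia.
      rewrite Nat.add_0_r, mult_INR, !minus_INR, mult_INR by lia. simpl. ring.
    - replace (N - 2 * m)%nat with 0%nat by lia.
      rewrite Nat.add_0_l, mult_INR, !minus_INR, mult_INR by lia. simpl. ring. }
  assert (Ht4 : (INR (N * N - t * t) = 4 * INR m * INR (N - m))%R)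
    by (rewrite Ht, !mult_INR; simpl; ring).
  unfold H. rewrite Ht, dilate4_mul4. unfold theta_poly. rewrite <- csum_mult_r.
  apply csum_ext. intros i _. rewrite <- Ht, Ht4, Ht2, !pow_n_RtoC, !RtoC_mult. ring.
Qed.

End ThetaCoefficients.

Section HeckeEigenforms.

Variables (k : nat) (a : nat -> C).

Lemma hecke_at_1 n : (1 <= n)%nat -> hecke k n a 1 = a n.
Proof.
  intros Hn. unfold hecke. rewrite sum_n_csum, csum_first, csum_eq0.
  - rewrite !Nat.mod_1_r, Nat.mul_1_l, Nat.mul_1_r, Nat.div_1_r, pow_n_RtoC, pow1. simpl. ring.
  - intros i _. rewrite Nat.mod_small by lia. reflexivity.
Qed.

Hypotheses (a_eigen : is_hecke_eigenform k a) (a_1 : a 1%nat = 1).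

Lemma hecke_eigenform_mult n m : (1 <= n)%nat -> hecke k n a m = a n * a m.
Proof.
  intros Hn. destruct (a_eigen n Hn) as [lam Hlam].
  pose proof (Hlam 1%nat) as E. rewrite hecke_at_1, a_1, Cmult_1_r in E by exact Hn.
  rewrite Hlam, E. reflexivity.
Qed.

Hypothesis a_0 : a 0%nat = 0.

(* [T_m] evaluated at [n - m]: the common divisors of [m] and [n - m] are those of [m] and [n]. *)
Lemma coef_mult_hecke n m : (1 <= n)%nat -> (m <= n)%nat ->
  a m * a (n - m)%nat =
  csum n (fun j => if andb (Nat.eqb (m mod S j) 0) (Nat.eqb (n mod S j) 0)
                   then RtoC (INR (S j) ^ (k - 1)) * a (m * (n - m) / (S j * S j))%nat else 0).
Proof.
  intros Hn Hm. destruct (Nat.eq_dec m 0) as [->|Hm0].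
  { rewrite a_0, Cmult_0_l. symmetry. apply csum_eq0. intros i _.
    rewrite Nat.mul_0_l, Nat.Div0.div_0_l, a_0. destruct (_ && _)%bool; ring. }
  rewrite <- hecke_eigenform_mult by lia. unfold hecke. rewrite sum_n_csum.
  replace (S (m - 1)) with m by lia.
  match goal with |- _ = csum n ?G =>
    replace (csum n G) with (csum (m + (n - m)) G) by (f_equal; lia) end.
  rewrite csum_cat, (csum_eq0 (n - m)), Cplus_0_r.
  - apply csum_ext. intros j Hj. cbv zeta.
    destruct (Nat.eqb_spec ((n - m) mod S j) 0) as [E1|E1],
      (Nat.eqb_spec (m mod S j) 0) as [E2|E2], (Nat.eqb_spec (n mod S j) 0) as [E3|E3];
      cbv [andb]; try reflexivity.
    + rewrite pow_n_RtoC, Nat.mul_comm. reflexivity.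
    + exfalso. apply E3, Nat.Lcm0.mod_divide. replace n with (m + (n - m))%nat by lia.
      apply Nat.divide_add_r; apply Nat.Lcm0.mod_divide; assumption.
    + exfalso. apply E1, Nat.Lcm0.mod_divide.
      apply Nat.divide_sub_r; apply Nat.Lcm0.mod_divide; assumption.
  - intros i Hi. rewrite (Nat.mod_small m) by lia.
    destruct (Nat.eqb_spec m 0); [lia | reflexivity].
Qed.

End HeckeEigenforms.

Section ShimuraIdentity.

Lemma csum_multiples d N (g : nat -> C) : (1 <= d)%nat ->
  csum (S (d * N)) (fun m => if Nat.eqb (m mod d) 0 then g m else 0)
  = csum (S N) (fun i => g (d * i)%nat).
Proof.
  intros Hd. induction N as [|N IH].
  - rewrite Nat.mul_0_r. simpl. rewrite Nat.Div0.mod_0_l, Nat.mul_0_r. reflexivity.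
  - replace (S (d * S N)) with (S (d * N) + S (d - 1))%nat by lia.
    rewrite csum_cat, IH. simpl csum. f_equal. rewrite csum_eq0, Cplus_0_l.
    + replace (S (d * N + (d - 1)))%nat with (S N * d)%nat by lia.
      rewrite Nat.Div0.mod_mul, Nat.eqb_refl. f_equal. lia.
    + intros i Hi. replace (S (d * N + i))%nat with (S i + N * d)%nat by lia.
      rewrite Nat.Div0.mod_add, Nat.mod_small by lia. reflexivity.
Qed.

Lemma bracket_self_expand k nu (a : nat -> C) n :
  rc_bracket (INR k) (INR k) (2 * nu) a a n
  = csum (S n) (fun m => bracket_poly k nu (INR m) (INR (n - m)) * (a m * a (n - m)%nat)).
Proof.
  unfold rc_bracket. rewrite sum_n_csum, (csum_ext _ _ (fun i => csum (S n) (fun m =>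
    RtoC (bracket_weight k nu i) * (pow_n (RtoC (INR m)) i * a m *
      (pow_n (RtoC (INR (n - m))) (2 * nu - i) * a (n - m)%nat))))).
  2:{ intros i _. rewrite sum_n_csum, <- csum_mult_l. reflexivity. }
  rewrite csum_swap. apply csum_ext. intros m _. unfold bracket_poly. rewrite <- csum_mult_r.
  apply csum_ext. intros i _. rewrite !pow_n_RtoC, !RtoC_mult. ring.
Qed.

Lemma shimura_theta_bracket_expand k nu (a : nat -> C) n : (1 <= k)%nat -> (1 <= n)%nat ->
  RtoC (shimura_const k nu)
    * shimura1 (k + 2 * nu) (rc_bracket (1/2) (INR k) nu theta_coef (dilate4 a)) n
  = csum n (fun j => if Nat.eqb (n mod S j) 0 then RtoC (INR (S j) ^ (k - 1)) *
      csum (S (n / S j)) (fun i =>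
        bracket_poly k nu (INR (S j * i)) (INR (n - S j * i)) * a (i * (n / S j - i))%nat)
    else 0).
Proof.
  intros Hk Hn. destruct n as [|n']; [lia|]. unfold shimura1. rewrite sum_n_csum.
  replace (S (S n' - 1)) with (S n') by lia. rewrite <- csum_mult_l. apply csum_ext.
  intros j Hj. cbv zeta. set (n := S n') in *. set (d := S j).
  destruct (Nat.eqb_spec (n mod d) 0) as [E|E]; [|ring].
  apply Nat.Div0.div_exact in E. set (N := (n / d)%nat) in *.
  assert (EN : (n * n / (d * d) = N * N)%nat).
  { rewrite E. replace (d * N * (d * N))%nat with (N * N * (d * d))%nat by ring.
    apply Nat.div_mul. unfold d. lia. }
  rewrite EN, theta_bracket_square, pow_n_RtoC.
  replace (k + 2 * nu - 1)%nat with ((k - 1) + 2 * nu)%nat by lia.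
  transitivity (RtoC (INR d ^ (k - 1)) * csum (S N) (fun m =>
    RtoC (INR d ^ (2 * nu)) * (RtoC (shimura_const k nu) * theta_poly k nu (INR m) (INR (N - m)))
    * a (m * (N - m))%nat)).
  { rewrite pow_add, RtoC_mult, <- !csum_mult_l. apply csum_ext. intros; ring. }
  f_equal. apply csum_ext. intros i Hi. f_equal.
  rewrite theta_poly_bracket_poly, bracket_poly_homog by exact Hk.
  rewrite <- !mult_INR, Nat.mul_sub_distr_l, <- E. reflexivity.
Qed.

Theorem shimura_theta_bracket_eigenform k nu (a : nat -> C) :
  (1 <= k)%nat -> a 0%nat = 0 -> is_hecke_eigenform k a -> a 1%nat = 1 ->
  forall n : nat,
    RtoC (shimura_const k nu)
      * shimura1 (k + 2 * nu) (rc_bracket (1 / 2) (INR k) nu theta_coef (dilate4 a)) n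
    = rc_bracket (INR k) (INR k) (2 * nu) a a n.
Proof.
  intros Hk a_0 a_eigen a_1 n. rewrite bracket_self_expand.
  destruct (Nat.eq_dec n 0) as [->|Hn].
  { simpl. rewrite a_0. ring. }
  rewrite shimura_theta_bracket_expand by lia.
  rewrite (csum_ext (S n) _ (fun m => csum n (fun j => bracket_poly k nu (INR m) (INR (n - m)) *
     (if andb (Nat.eqb (m mod S j) 0) (Nat.eqb (n mod S j) 0)
      then RtoC (INR (S j) ^ (k - 1)) * a (m * (n - m) / (S j * S j))%nat else 0)))).
  2:{ intros m Hm. rewrite (coef_mult_hecke k a) by (assumption || lia).
      rewrite <- csum_mult_l. reflexivity. }
  rewrite csum_swap. apply csum_ext. intros j Hj. set (d := S j).
  destruct (Nat.eqb_spec (n mod d) 0) as [E|E].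
  2:{ symmetry. apply csum_eq0. intros i _. rewrite Bool.andb_false_r. ring. }
  apply Nat.Div0.div_exact in E. set (N := (n / d)%nat) in *.
  rewrite (csum_ext (S n) _ (fun m => RtoC (INR d ^ (k - 1)) * (if Nat.eqb (m mod d) 0 then
        bracket_poly k nu (INR m) (INR (n - m)) * a (m * (n - m) / (d * d))%nat else 0))).
  2:{ intros m _. rewrite Bool.andb_true_r. destruct (Nat.eqb (m mod d) 0); ring. }
  rewrite csum_mult_l. f_equal. rewrite E at 1. rewrite csum_multiples by (unfold d; lia).
  apply csum_ext. intros i Hi. f_equal. f_equal.
  rewrite E, <- Nat.mul_sub_distr_l.
  replace (d * i * (d * (N - i)))%nat with (i * (N - i) * (d * d))%nat by ring.
  symmetry. apply Nat.div_mul. unfold d. lia.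
Qed.

End ShimuraIdentity.

Section UnitCircle.

Definition cis2pi (t : R) : C := (cos (2 * PI * t), sin (2 * PI * t)).

Lemma cis2pi_add s t : cis2pi s * cis2pi t = cis2pi (s + t).
Proof.
  unfold cis2pi. replace (2 * PI * (s + t))%R with (2 * PI * s + 2 * PI * t)%R by ring.
  rewrite cos_plus, sin_plus. unfold Cmult. simpl. f_equal; ring.
Qed.

Lemma cis2pi_0 : cis2pi 0 = 1.
Proof. unfold cis2pi. rewrite Rmult_0_r, cos_0, sin_0. reflexivity. Qed.

Lemma cis2pi_INR (n : nat) : cis2pi (INR n) = 1.
Proof.
  unfold cis2pi. replace (2 * PI * INR n)%R with (0 + 2 * INR n * PI)%R by ring.
  rewrite cos_period, sin_period, cos_0, sin_0. reflexivity.
Qed.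

Lemma cis2pi_IZR (z : Z) : cis2pi (IZR z) = 1.
Proof.
  destruct (Z_le_gt_dec 0 z).
  - rewrite <- (Z2Nat.id z), <- INR_IZR_INZ by lia. apply cis2pi_INR.
  - replace (IZR z) with (- INR (Z.to_nat (- z)))%R
      by (rewrite INR_IZR_INZ, Z2Nat.id, opp_IZR by lia; ring).
    rewrite <- (Cmult_1_r (cis2pi _)), <- (cis2pi_INR (Z.to_nat (- z))) at 1.
    rewrite cis2pi_add, Rplus_opp_l. apply cis2pi_0.
Qed.

Lemma cis2pi_shift t (z : Z) : cis2pi (t + IZR z) = cis2pi t.
Proof. rewrite <- cis2pi_add, cis2pi_IZR. apply Cmult_1_r. Qed.

Lemma Cmod_cis2pi t : Cmod (cis2pi t) = 1%R.
Proof.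
  unfold cis2pi, Cmod. simpl fst. simpl snd. rewrite <- sqrt_1. f_equal.
  rewrite <- (sin2_cos2 (2 * PI * t)). unfold Rsqr. ring.
Qed.

Lemma cis2pi_neq_1 t : (0 < t < 1)%R -> cis2pi t <> 1.
Proof.
  intros Ht Heq. unfold cis2pi in Heq. injection Heq as Hc Hs. pose proof PI_RGT_0 as Hpi.
  destruct (Rtotal_order (2 * PI * t) PI) as [H|[H|H]].
  - assert (0 < sin (2 * PI * t))%R by (apply sin_gt_0; nra). lra.
  - rewrite H, cos_PI in Hc. lra.
  - assert (sin (2 * PI * t) < 0)%R by (apply sin_lt_0; nra). lra.
Qed.

Lemma csum_cis2pi_roots N (r : Z) : (0 < N)%nat ->
  csum N (fun j => cis2pi (IZR r * INR j / INR N))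
  = if Z.eqb (r mod Z.of_nat N) 0 then RtoC (INR N) else 0.
Proof.
  intros HN. set (r0 := (r mod Z.of_nat N)%Z).
  assert (Hr : r = (Z.of_nat N * (r / Z.of_nat N) + r0)%Z) by (apply Z.div_mod; lia).
  assert (Hb : (0 <= r0 < Z.of_nat N)%Z) by (apply Z.mod_pos_bound; lia).
  assert (HNR : INR N <> 0%R) by (apply not_0_INR; lia).
  rewrite (csum_ext _ _ (fun j => cis2pi (IZR r0 * INR j / INR N))).
  2:{ intros j _.
      rewrite <- (cis2pi_shift (IZR r0 * INR j / INR N) (r / Z.of_nat N * Z.of_nat j)). f_equal.
      rewrite Hr at 1. rewrite plus_IZR, !mult_IZR, <- !INR_IZR_INZ. field. exact HNR. }
  destruct (Z.eqb_spec r0 0) as [E0|E0].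
  - rewrite (csum_ext _ _ (fun _ => 1)), csum_const; [ring|].
    intros j _. rewrite E0, Rmult_0_l, Rdiv_0_l. apply cis2pi_0.
  - set (w := cis2pi (IZR r0 / INR N)).
    assert (Hw : w - 1 <> 0).
    { intros H. apply (cis2pi_neq_1 (IZR r0 / INR N)).
      - assert (1 <= IZR r0)%R by (apply IZR_le; lia).
        assert (IZR r0 < INR N)%R by (rewrite INR_IZR_INZ; apply IZR_lt; lia).
        split; [apply Rdiv_lt_0_compat; lra|].
        apply Rlt_div_l; lra.
      - fold w. rewrite <- (Cplus_0_l 1), <- H. ring. }
    (* The sum is a geometric progression of ratio [w <> 1] whose [N]-th power is [1]. *)
    set (Sw := csum N (fun j => cis2pi (IZR r0 * INR j / INR N))).
    assert (Htel : Sw * (w - 1) = 0).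
    { unfold Sw. rewrite <- csum_mult_r, (csum_ext _ _ (fun j =>
        cis2pi (IZR r0 * INR (S j) / INR N) - cis2pi (IZR r0 * INR j / INR N))).
      - rewrite (csum_telescope N (fun j => cis2pi (IZR r0 * INR j / INR N))).
        replace (IZR r0 * INR N / INR N)%R with (IZR r0) by (field; exact HNR).
        rewrite cis2pi_IZR. simpl INR. rewrite Rmult_0_r, Rdiv_0_l, cis2pi_0. ring.
      - intros j _. unfold w.
        transitivity (cis2pi (IZR r0 * INR j / INR N) * cis2pi (IZR r0 / INR N)
                      - cis2pi (IZR r0 * INR j / INR N)); [ring|].
        rewrite cis2pi_add, S_INR. do 2 f_equal. field. exact HNR. }
    rewrite <- (Cmult_1_r Sw), <- (Cinv_r (w - 1) Hw), Cmult_assoc, Htel. ring.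
Qed.

End UnitCircle.

Section QExpansions.

Definition qmod (y : R) : R := exp (- 2 * PI * y).

Lemma qmod_pos y : (0 < qmod y)%R.
Proof. apply exp_pos. Qed.

Lemma qmod_lt_1 y : (0 < y)%R -> (qmod y < 1)%R.
Proof. intros Hy. unfold qmod. rewrite <- exp_0. apply exp_increasing. pose proof PI_RGT_0. nra. Qed.

Lemma qmod_le y1 y2 : (y1 <= y2)%R -> (qmod y2 <= qmod y1)%R.
Proof.
  intros Hy. unfold qmod. destruct (Req_dec y1 y2) as [->|]; [lra|].
  left. apply exp_increasing. pose proof PI_RGT_0. nra.
Qed.

Lemma qmod_add y1 y2 : qmod (y1 + y2) = (qmod y1 * qmod y2)%R.
Proof. unfold qmod. rewrite <- exp_plus. f_equal. ring. Qed.

Lemma qmod_quarter_lt_half : (qmod (1/4) < 1/2)%R.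
Proof.
  unfold qmod. replace (-2 * PI * (1/4))%R with (- (PI / 2))%R by field.
  rewrite exp_Ropp. pose proof (exp_ineq1 (PI / 2)) as H. pose proof PI2_1.
  apply (Rmult_lt_reg_r (exp (PI / 2))); [apply exp_pos|].
  rewrite Rinv_l by (apply Rgt_not_eq, exp_pos). lra.
Qed.

Lemma exp_INR_mult (x : R) m : exp (INR m * x) = (exp x ^ m)%R.
Proof.
  induction m as [|m IH]; [simpl; rewrite Rmult_0_l; apply exp_0|].
  rewrite S_INR, Rmult_plus_distr_r, Rmult_1_l, exp_plus, IH. simpl. ring.
Qed.

Lemma qpow_polar tau m : qpow tau m = RtoC (qmod (Im tau) ^ m) * cis2pi (INR m * Re tau).
Proof.
  unfold qpow, qmod, cis2pi. rewrite <- exp_INR_mult.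
  replace (- 2 * PI * INR m * Im tau)%R with (INR m * (- 2 * PI * Im tau))%R by ring.
  replace (2 * PI * INR m * Re tau)%R with (2 * PI * (INR m * Re tau))%R by ring.
  reflexivity.
Qed.

Lemma Cmod_qpow tau m : Cmod (qpow tau m) = (qmod (Im tau) ^ m)%R.
Proof.
  rewrite qpow_polar, Cmod_mult, Cmod_cis2pi, Cmod_R, Rabs_pos_eq; [ring|].
  apply pow_le. left. apply qmod_pos.
Qed.

Lemma qpow_shift tau (z : Z) m : qpow (tau + RtoC (IZR z)) m = qpow tau m.
Proof.
  rewrite !qpow_polar. destruct tau as [x y]. simpl. f_equal.
  - do 3 f_equal. ring.
  - replace (INR m * (x + IZR z))%R with (INR m * x + IZR (Z.of_nat m * z))%R
      by (rewrite mult_IZR, <- INR_IZR_INZ; ring).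
    apply cis2pi_shift.
Qed.

Lemma is_series_finite (f : nat -> C) N :
  (forall m, (N <= m)%nat -> f m = 0) -> is_series f (csum N f).
Proof.
  intros H. apply filterlim_ext_loc with (f := fun _ => csum N f); [|apply filterlim_const].
  exists N. intros M HM. rewrite sum_n_csum. replace (S M) with (N + (S M - N))%nat by lia.
  rewrite csum_cat, (csum_eq0 (S M - N)); [ring|]. intros i _. apply H. lia.
Qed.

Lemma is_series_csum N (u : nat -> nat -> C) (l : nat -> C) :
  (forall j, (j < N)%nat -> is_series (u j) (l j)) ->
  is_series (fun m => csum N (fun j => u j m)) (csum N l).
Proof.
  induction N as [|N IH]; intros H.
  - exact (is_series_finite (fun _ => 0) 0 (fun _ _ => eq_refl)).
  - exact (is_series_plus _ _ _ _ (IH (fun j Hj => H j ltac:(lia))) (H N ltac:(lia))).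
Qed.

Lemma Cmod_series_le (u : nat -> C) (v : nat -> R) l L :
  is_series u l -> is_series v L -> (forall m, Cmod (u m) <= v m)%R -> (Cmod l <= L)%R.
Proof.
  intros Hu Hv Hle.
  assert (H1 : is_lim_seq (fun M => Cmod (sum_n u M)) (Cmod l)).
  { unfold is_lim_seq. change (Cmod l) with (@norm C_AbsRing C_NormedModule l).
    apply filterlim_ext with (f := fun M => norm (sum_n u M)); [reflexivity|].
    eapply filterlim_comp; [apply Hu | apply filterlim_norm]. }
  assert (H2 : forall M, (Cmod (sum_n u M) <= sum_n v M)%R).
  { intros M. change (Cmod (sum_n u M)) with (@norm C_AbsRing C_NormedModule (sum_n u M)).
    eapply Rle_trans; [apply (@norm_sum_n_m C_AbsRing C_NormedModule)|].
    apply sum_n_m_le. intros. apply Hle. }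
  exact (is_lim_seq_le _ _ _ _ H2 H1 (Hv : is_lim_seq (sum_n v) L)).
Qed.

Lemma is_series_terms_bounded (u : nat -> C) l :
  is_series u l -> exists B, forall m, (Cmod (u m) <= B)%R.
Proof.
  intros Hu. destruct (filterlim_bounded (sum_n u) (ex_intro _ l Hu)) as [M HM].
  change (forall n, Cmod (sum_n u n) <= M)%R in HM.
  exists (2 * M)%R. intros [|m].
  - specialize (HM O). pose proof (Cmod_ge_0 (sum_n u 0)). rewrite sum_O in *. lra.
  - replace (u (S m)) with (sum_n u (S m) - sum_n u m)
      by (rewrite sum_Sn; change plus with Cplus; ring).
    eapply Rle_trans; [apply Cmod_triangle|]. rewrite Cmod_opp.
    pose proof (HM (S m)). pose proof (HM m). lra.
Qed.

End QExpansions.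

Section WeightZeroCuspForms.

Variables (a : nat -> C) (F : C -> C).

Hypothesis a_series :
  forall tau, (0 < Im tau)%R -> is_series (fun n => a n * qpow tau n) (F tau).

Hypothesis F_inv : forall tau, (0 < Im tau)%R -> F (- / tau) = F tau.

Lemma ex_series_coef_abs y : (0 < y)%R -> ex_series (fun m => Cmod (a m) * qmod y ^ m)%R.
Proof.
  intros Hy.
  destruct (is_series_terms_bounded _ _ (a_series (0, y / 2)%R ltac:(simpl; lra))) as [B HB].
  apply (@ex_series_le R_AbsRing R_CompleteNormedModule) with (b := fun m => (B * qmod (y / 2) ^ m)%R).
  - intros m. change norm with Rabs. rewrite Rabs_pos_eq
      by (apply Rmult_le_pos; [apply Cmod_ge_0 | apply pow_le; left; apply qmod_pos]).
    specialize (HB m). rewrite Cmod_mult, Cmod_qpow in HB. simpl (Im _) in HB.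
    replace y with (y / 2 + y / 2)%R at 1 by field.
    rewrite qmod_add, Rpow_mult_distr, <- Rmult_assoc.
    apply Rmult_le_compat_r; [apply pow_le; left; apply qmod_pos | exact HB].
  - apply ex_series_ext with (a := fun m => scal B (qmod (y / 2) ^ m)%R); [reflexivity|].
    apply (@ex_series_scal_l R_AbsRing R_NormedModule), ex_series_geom.
    rewrite Rabs_pos_eq by (left; apply qmod_pos). apply qmod_lt_1. lra.
Qed.

Definition cusp_bound : R := Series (fun m => Cmod (a m) * qmod (1/2) ^ m)%R.

Lemma F_bound_high tau : (1/2 <= Im tau)%R -> (Cmod (F tau) <= cusp_bound)%R.
Proof.
  intros Ht. apply (Cmod_series_le (fun n => a n * qpow tau n) (fun m => Cmod (a m) * qmod (1/2) ^ m)%R).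
  - apply a_series. lra.
  - apply Series_correct, ex_series_coef_abs. lra.
  - intros m. rewrite Cmod_mult, Cmod_qpow. apply Rmult_le_compat_l; [apply Cmod_ge_0|].
    apply pow_incr. split; [left; apply qmod_pos | apply qmod_le; exact Ht].
Qed.

Lemma F_periodic tau (z : Z) : (0 < Im tau)%R -> F (tau + RtoC (IZR z)) = F tau.
Proof.
  intros Ht. apply (filterlim_locally_unique (F := eventually) (sum_n (fun n => a n * qpow tau n))).
  - apply is_series_ext with (a := fun n => a n * qpow (tau + RtoC (IZR z)) n).
    + intros n. rewrite qpow_shift. reflexivity.
    + apply a_series. destruct tau. simpl in *. lra.
  - apply a_series. exact Ht.
Qed.

(* Reduction to the fundamental domain: once [|Re tau| <= 1/2] and [Im tau < 1/2],
   [tau |-> -1/tau] at least doubles the imaginary part. *)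
Lemma F_bound_doubling p tau : (0 < Im tau)%R -> (1/2 <= Im tau * 2 ^ p)%R ->
  (Cmod (F tau) <= cusp_bound)%R.
Proof.
  revert tau. induction p as [|p IH]; intros tau Hy Hp.
  { apply F_bound_high. simpl in Hp. lra. }
  destruct (Rle_lt_dec (1/2) (Im tau)) as [Hh|Hl]; [apply F_bound_high; exact Hh|].
  destruct tau as [x y]. simpl in Hy, Hp, Hl.
  destruct (archimed (x + 1/2)) as [Ha1 Ha2].
  set (z := (up (x + 1/2) - 1)%Z). set (x1 := (x - IZR z)%R).
  assert (Hx1 : (-1/2 <= x1 <= 1/2)%R) by (unfold x1, z; rewrite minus_IZR; simpl; lra).
  assert (E1 : F (x, y) = F (x1, y)).
  { rewrite <- (F_periodic (x, y) (- z)) by (simpl; lra).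
    f_equal. unfold x1, Cplus, RtoC. rewrite opp_IZR. simpl. f_equal; ring. }
  assert (D : (0 < x1 ^ 2 + y ^ 2)%R) by nra.
  assert (Eim : Im (- / (x1, y)) = (y / (x1 ^ 2 + y ^ 2))%R) by (simpl; field; lra).
  assert (H2 : (2 * y <= y / (x1 ^ 2 + y ^ 2))%R).
  { apply (Rmult_le_reg_r (x1 ^ 2 + y ^ 2)); [exact D|].
    replace (y / (x1 ^ 2 + y ^ 2) * (x1 ^ 2 + y ^ 2))%R with y by (field; lra).
    assert (x1 ^ 2 + y ^ 2 <= 1/2)%R by nra. nra. }
  rewrite E1, <- F_inv by (simpl; lra).
  apply IH; rewrite Eim; [apply Rdiv_lt_0_compat; lra|].
  simpl pow in Hp. assert (0 < 2 ^ p)%R by (apply pow_lt; lra). nra.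
Qed.

Lemma F_bounded tau : (0 < Im tau)%R -> (Cmod (F tau) <= cusp_bound)%R.
Proof.
  intros Hy. set (p := Z.to_nat (up (1 / (2 * Im tau)))).
  apply (F_bound_doubling p); [exact Hy|].
  destruct (archimed (1 / (2 * Im tau))) as [H1 _].
  assert (Hpos : (0 < 1 / (2 * Im tau))%R) by (apply Rdiv_lt_0_compat; lra).
  assert (Hp : (1 / (2 * Im tau) <= INR p)%R).
  { unfold p. rewrite INR_IZR_INZ, Z2Nat.id; [lra|]. apply le_IZR. lra. }
  assert (H2p : (INR p <= 2 ^ p)%R).
  { clear. induction p as [|p IH]; [simpl; lra|].
    rewrite S_INR. simpl. assert (1 <= 2 ^ p)%R by (apply pow_R1_Rle; lra). lra. }
  assert (1 / (2 * Im tau) * (2 * Im tau) = 1)%R by (field; lra). nra.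
Qed.

Definition coef_tail (N : nat) (y : R) (m : nat) : R :=
  if Nat.leb N m then (Cmod (a m) * qmod y ^ m)%R else 0%R.

Lemma coef_tail_ge0 N y m : (0 <= coef_tail N y m)%R.
Proof.
  unfold coef_tail. destruct (Nat.leb N m); [|lra].
  apply Rmult_le_pos; [apply Cmod_ge_0 | apply pow_le; left; apply qmod_pos].
Qed.

Lemma ex_series_coef_tail N y : (0 < y)%R -> ex_series (coef_tail N y).
Proof.
  intros Hy. apply (@ex_series_le R_AbsRing R_CompleteNormedModule)
    with (b := fun m => (Cmod (a m) * qmod y ^ m)%R); [|exact (ex_series_coef_abs y Hy)].
  intros m. change norm with Rabs. rewrite Rabs_pos_eq by apply coef_tail_ge0.
  unfold coef_tail. destruct (Nat.leb N m); [lra|].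
  apply Rmult_le_pos; [apply Cmod_ge_0 | apply pow_le; left; apply qmod_pos].
Qed.

Lemma coef_tail_small y eps : (0 < y)%R -> (0 < eps)%R ->
  exists N0, forall N, (N0 <= N)%nat -> (Series (coef_tail N y) <= eps)%R.
Proof.
  intros Hy He. set (b := fun m => (Cmod (a m) * qmod y ^ m)%R).
  assert (Hb : ex_series b) by exact (ex_series_coef_abs y Hy).
  assert (Hl : is_lim_seq (sum_n b) (Series b)) by exact (Series_correct _ Hb).
  apply is_lim_seq_spec in Hl.
  destruct (Hl (mkposreal eps He)) as [M0 HM0]. simpl in HM0.
  exists (S M0). intros N HN.
  rewrite (Series_incr_n (coef_tail N y) N) by (lia || exact (ex_series_coef_tail N y Hy)).
  rewrite sum_eq_R0 by (intros m Hm; unfold coef_tail; destruct (Nat.leb_spec N m); lia || reflexivity).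
  rewrite (Series_ext _ (fun k => b (N + k)%nat)).
  2:{ intros k. unfold coef_tail, b. destruct (Nat.leb_spec N (N + k)); [reflexivity | lia]. }
  pose proof (Series_incr_n b N ltac:(lia) Hb).
  specialize (HM0 (pred N) ltac:(lia)). rewrite sum_n_Reals in HM0.
  apply Rabs_lt_between in HM0. lra.
Qed.

(* Averaging [F] over the [N] points [j/N + i y] against [e^(-2 pi i n j/N)] keeps the
   terms of the [q]-expansion of index [m = n mod N]. *)
Lemma fourier_average_series n N y : (0 < N)%nat -> (0 < y)%R ->
  is_series (fun m => a m * RtoC (qmod y ^ m)
               * (if Z.eqb ((Z.of_nat m - Z.of_nat n) mod Z.of_nat N) 0 then RtoC (INR N) else 0))
            (csum N (fun j => cis2pi (- (INR n * (INR j / INR N))) * F (INR j / INR N, y)%R)).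
Proof.
  intros HN Hy. assert (HNR : (0 < INR N)%R) by (apply lt_0_INR; lia).
  apply is_series_ext with (a := fun m => csum N (fun j =>
    cis2pi (- (INR n * (INR j / INR N))) * (a m * qpow (INR j / INR N, y)%R m))).
  - intros m. rewrite <- csum_cis2pi_roots, <- csum_mult_l by exact HN. apply csum_ext. intros j _.
    rewrite qpow_polar. simpl Im. simpl Re.
    replace (IZR (Z.of_nat m - Z.of_nat n) * INR j / INR N)%R with
      (- (INR n * (INR j / INR N)) + INR m * (INR j / INR N))%R
      by (rewrite minus_IZR, <- !INR_IZR_INZ; field; lra).
    rewrite <- cis2pi_add. ring.
  - apply is_series_csum. intros j _. apply (@is_series_scal_l C_AbsRing C_NormedModule).
    apply a_series. simpl. exact Hy.
Qed.

Lemma coef_bound_tail n N y : (n < N)%nat -> (0 < y)%R ->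
  (Cmod (a n) * qmod y ^ n <= cusp_bound + Series (coef_tail N y))%R.
Proof.
  intros HnN Hy. assert (HNR : (0 < INR N)%R) by (apply lt_0_INR; lia).
  pose proof (fourier_average_series n N y ltac:(lia) Hy) as Hc.
  set (c := fun m => _ : C) in Hc. set (G := csum N _) in Hc.
  assert (Hcn : c n = a n * RtoC (qmod y ^ n) * RtoC (INR N))
    by (unfold c; rewrite Z.sub_diag, Zmod_0_l; reflexivity).
  set (d := fun m => if Nat.eqb m n then c m else 0).
  assert (Hd : is_series d (c n)).
  { replace (c n) with (csum (S n) d).
    - apply is_series_finite. intros m Hm. unfold d. destruct (Nat.eqb_spec m n); [lia | reflexivity].
    - simpl csum. rewrite csum_eq0; unfold d; [rewrite Nat.eqb_refl; ring|].
      intros i Hi. destruct (Nat.eqb_spec i n); [lia | reflexivity]. }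
  assert (Hv : is_series (fun m => (INR N * coef_tail N y m)%R) (INR N * Series (coef_tail N y))%R)
    by exact (is_series_scal_l _ _ _ (Series_correct _ (ex_series_coef_tail N y Hy))).
  (* Apart from [m = n], only indices [m >= N] survive the averaging. *)
  assert (Hrest : (Cmod (G - c n) <= INR N * Series (coef_tail N y))%R).
  { apply (Cmod_series_le _ _ _ _ (is_series_minus _ _ _ _ Hc Hd) Hv). intros m.
    change plus with Cplus. change opp with Copp.
    pose proof (coef_tail_ge0 N y m). unfold d. destruct (Nat.eqb_spec m n) as [->|Hmn].
    { rewrite Cplus_opp_r, Cmod_0. nra. }
    rewrite Copp_0, Cplus_0_r. unfold c.
    destruct (Z.eqb_spec ((Z.of_nat m - Z.of_nat n) mod Z.of_nat N) 0) as [Ez|Ez];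
      [|rewrite Cmult_0_r, Cmod_0; nra].
    apply Z.mod_divide in Ez as [t Ht]; [|lia].
    unfold coef_tail. destruct (Nat.leb_spec N m).
    2:{ exfalso. apply Hmn. destruct (Z.lt_trichotomy t 0) as [|[->|]]; nia. }
    rewrite !Cmod_mult, !Cmod_R, !Rabs_pos_eq by (lra || apply pow_le; left; apply qmod_pos). lra. }
  assert (HG : (Cmod G <= INR N * cusp_bound)%R).
  { apply csum_norm_le. intros j _. rewrite Cmod_mult, Cmod_cis2pi, Rmult_1_l.
    apply F_bounded. simpl. exact Hy. }
  assert (Htri : (Cmod (c n) <= Cmod G + Cmod (G - c n))%R).
  { replace (c n) with (G + - (G - c n)) at 1 by ring.
    eapply Rle_trans; [apply Cmod_triangle | rewrite Cmod_opp; lra]. }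
  rewrite Hcn in Hrest. rewrite Hcn, !Cmod_mult, !Cmod_R, !Rabs_pos_eq in Htri by (lra || apply pow_le; left; apply qmod_pos).
  apply (Rmult_le_reg_r (INR N)); [exact HNR | lra].
Qed.

Lemma coef_bound n y : (0 < y)%R -> (Cmod (a n) * qmod y ^ n <= cusp_bound)%R.
Proof.
  intros Hy. destruct (Rle_lt_dec (Cmod (a n) * qmod y ^ n) cusp_bound) as [H|H]; [exact H|].
  exfalso. set (eps := ((Cmod (a n) * qmod y ^ n - cusp_bound) / 2)%R).
  destruct (coef_tail_small y eps Hy ltac:(unfold eps; lra)) as [N0 HN0].
  pose proof (coef_bound_tail n (Nat.max N0 (S n)) y ltac:(lia) Hy).
  pose proof (HN0 (Nat.max N0 (S n)) ltac:(lia)). unfold eps in *. lra.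
Qed.

(* With [t = e^(-pi/2) < 1/2], [|a m| <= cusp_bound * t^(-m)] and [a 0 = 0] turn the series
   defining [cusp_bound] into [cusp_bound <= cusp_bound * t / (1 - t)], forcing
   [cusp_bound <= 0], while [|a 1| t <= cusp_bound] makes it positive. *)
Lemma weight0_coef_0_1_false : a 0%nat = 0 -> a 1%nat = 1 -> False.
Proof.
  intros a_0 a_1. set (t := qmod (1/4)). set (A := cusp_bound).
  assert (Ht0 : (0 < t)%R) by apply qmod_pos.
  assert (Ht1 : (t < 1/2)%R) by apply qmod_quarter_lt_half.
  assert (Hr : qmod (1/2) = (t * t)%R) by (unfold t; rewrite <- qmod_add; f_equal; lra).
  assert (HA : A = Series (fun k => Cmod (a (S k)) * qmod (1/2) ^ (S k))%R).
  { unfold A, cusp_bound. rewrite Series_incr_1 by (apply ex_series_coef_abs; lra).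
    rewrite a_0, Cmod_0. ring. }
  assert (Hg : is_series (fun k => (A * t * t ^ k)%R) (A * t * / (1 - t))%R).
  { apply (@is_series_scal_l R_AbsRing R_NormedModule (A * t)%R (fun k => t ^ k)%R).
    apply is_series_geom. rewrite Rabs_pos_eq; lra. }
  assert (Hle : (A <= A * t * / (1 - t))%R).
  { rewrite HA at 1. rewrite <- (is_series_unique _ _ Hg). apply Series_le; [|eexists; exact Hg].
    intros k. rewrite Hr, Rpow_mult_distr, <- Rmult_assoc. split.
    - apply Rmult_le_pos; [apply Rmult_le_pos; [apply Cmod_ge_0|] | ]; apply pow_le; lra.
    - replace (A * t * t ^ k)%R with (A * t ^ S k)%R by (simpl; ring).
      apply Rmult_le_compat_r; [apply pow_le; lra | apply coef_bound; lra]. }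
  pose proof (coef_bound 1 (1/4) ltac:(lra)) as Hc1. rewrite a_1, Cmod_1 in Hc1. fold t A in Hc1.
  assert (A * t * / (1 - t) * (1 - t) = A * t)%R by (field; lra).
  assert (A * (1 - t) <= A * t)%R by (apply (Rmult_le_compat_r (1 - t)) in Hle; lra).
  simpl in Hc1. nra.
Qed.

End WeightZeroCuspForms.

Lemma no_normalized_weight0_cusp_form (a : nat -> C) :
  is_cusp_form 0 a -> a 1%nat = 1 -> False.
Proof.
  intros [a_0 [F [a_series F_inv]]] a_1.
  apply (weight0_coef_0_1_false a F a_series); [|exact a_0 | exact a_1].
  intros tau Ht. rewrite F_inv by exact Ht. apply Cmult_1_l.
Qed.

Theorem proposition2p1 (k nu : nat) (a : nat -> C) :
  Nat.Even k ->
  is_cusp_form k a ->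
  is_hecke_eigenform k a ->
  a 1%nat = 1 ->
  forall n : nat,
    RtoC (INR (fact (k + 2 * nu - 1)) / INR (fact (k + nu - 1)))
      * shimura1 (k + 2 * nu) (rc_bracket (1 / 2) (INR k) nu theta_coef (dilate4 a)) n
    = rc_bracket (INR k) (INR k) (2 * nu) a a n.
Proof.
  intros _ a_cusp a_eigen a_1.
  destruct k as [|k].
  - exfalso. exact (no_normalized_weight0_cusp_form a a_cusp a_1).
  - apply shimura_theta_bracket_eigenform; [lia | exact (proj1 a_cusp) | exact a_eigen | exact a_1].
Qed.
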